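(* Assume $W_c$ satisfies Assumption 1. Then for all integers $k,n\ge2$, \[ \log P_j(k,n)\le\inf_{s\in(0,1)}\Big[-nsR+(n-1)\,U\big[W_s,W_c,\downarrow;\tfrac{k-1}{n-1}\big](s)+\overline\delta_{W_s}(s)+\overline\delta_{W_c}(s)\Big]. \]
   Context: Setup. $\mathcal M$ is a finite set and $W_s=\{W_s(m|m')\}$ an irreducible aperiodic transition matrix on $\mathcal M$; the message $M^k=(M_1,\dots,M_k)$ has law $P_{M^k}(m^k)=P_{M_1}(m_1)\prod_{i=2}^kW_s(m_i|m_{i-1})$ for some initial distribution $P_{M_1}$. $\mathcal X$ is a finite abelian group, $\mathcal Z$ a finite set, $W_c=\{W_c(x,z|x',z')\}$ an irreducible aperiodic transition matrix on $\mathcal X\times\mathcal Z$, and $(X^n,Z^n)$ has law $P_{X^nZ^n}(x^n,z^n)=P_{X_1Z_1}(x_1,z_1)\prod_{i=2}^nW_c(x_i,z_i|x_{i-1},z_{i-1})$ for an initial distribution $P_{X_1Z_1}$ with marginal $P_{Z_1}$. The channel maps input $\tilde x^n\in\mathcal X^n$ to output $(x^n,z^n)$ with probability $P_{X^nZ^n}(x^n-\tilde x^n,z^n)$. A code is $(\mathsf e,\mathsf d)$ with $\mathsf e:\mathcal M^k\to\mathcal X^n$, $\mathsf d:(\mathcal X\times\mathcal Z)^n\to\mathcal M^k$; $P_j(k,n)$ is the infimum over codes of $\sum_{m^k}P_{M^k}(m^k)\Pr[\mathsf d(\text{output})\ne m^k\mid\text{input }\mathsf e(m^k)]$. $R:=\log|\mathcal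 X|$. Assumption 1: $\sum_xW_c(x,z|x',z')$ does not depend on $x'$; call it $W_{c,Z}(z|z')$. Perron–Frobenius notation: entrywise powers $a^t$ of transition probabilities are taken to be $0$ when $a=0$. For a nonnegative irreducible matrix $A$ indexed by a finite set, $\lambda(A)$ is its Perron–Frobenius eigenvalue and $v_A$ the positive vector with $\sum_iv_A(i)A(i,j)=\lambda(A)v_A(j)$ for all $j$, normalized so $\min_iv_A(i)=1$. Quantities. $A^s_\theta(m,m'):=W_s(m|m')^{1-\theta}$; $A^c_\theta((x,z),(x',z')):=W_c(x,z|x',z')^{1-\theta}W_{c,Z}(z|z')^{\theta}$. $\theta H^{W_s}_{1-\theta}(M):=\log\lambda(A^s_\theta)$, $\theta H^{W_c,\downarrow}_{1-\theta}(X|Z):=\log\lambda(A^c_\theta)$. For $r>0$: $U[W_s,W_c,\downarrow;r](\theta):=r\theta H^{W_s}_{1-\theta}(M)+\theta H^{W_c,\downarrow}_{1-\theta}(X|Z)$. With $w^s_\theta(m):=P_{M_1}(m)^{1-\theta}$ and $w^c_\theta(x,z):=P_{X_1Z_1}(x,z)^{1-\theta}P_{Z_1}(z)^{\theta}$: $\overline\delta_{W_s}(\theta):=\log(v_{A^s_\theta}\cdot w^s_\theta)$, $\overline\delta_{W_c}(\theta):=\log(v_{A^c_\theta}\cdot w^c_\theta)$. *)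

From HB Require Import structures.
From mathcomp Require Import all_boot.
From mathcomp Require Import ssralg finalg.
From Stdlib Require Import Reals ClassicalEpsilon.
Set Implicit Arguments. Unset Strict Implicit. Unset Printing Implicit Defensive.
Open Scope R_scope.

Definition fsum (T : finType) (F : T -> R) : R := \big[Rplus/R0]_(i : T) F i.

(* a^t with the convention 0^t = 0 *)
Definition rpow (a t : R) : R :=
  if Req_EM_T a 0 then 0 else Rpower a t.

(* t-step transition probability W^t(j|i): W j i is W(j|i) *)
Fixpoint tpow (T : finType) (W : T -> T -> R) (t : nat) (j i : T) : R :=
  match t with
  | O => if j == i then 1 else 0
  | S t' => fsum (fun l => W j l * tpow W t' l i)
  end.

Definition stochastic (T : finType) (W : T -> T -> R) : Prop :=
  (forall j i, 0 <= W j i) /\ (forall i, fsum (fun j => W j i) = 1).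

Definition distribution (T : finType) (P : T -> R) : Prop :=
  (forall i, 0 <= P i) /\ fsum P = 1.

Definition irreducible (T : finType) (W : T -> T -> R) : Prop :=
  forall i j : T, exists t, (1 <= t)%nat /\ 0 < tpow W t j i.

Definition aperiodic (T : finType) (W : T -> T -> R) : Prop :=
  forall (i : T) (d : nat),
    (forall t, (1 <= t)%nat -> 0 < tpow W t i i -> (d %| t)%N) -> d = 1%nat.

(* Perron-Frobenius eigenvalue and normalized positive left eigenvector
   (unique for nonnegative irreducible A, chosen by epsilon). *)
Definition is_pf_pair (T : finType) (A : T -> T -> R) (l : R) (v : T -> R) : Prop :=
  (forall i, 0 < v i) /\ (forall j, fsum (fun i => v i * A i j) = l * v j).

Definition pf_eig (T : finType) (A : T -> T -> R) : R :=
  epsilon (inhabits 0) (fun l => exists v, is_pf_pair A l v).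

Definition pf_vec (T : finType) (A : T -> T -> R) : T -> R :=
  epsilon (inhabits (fun _ => 0))
    (fun v => is_pf_pair A (pf_eig A) v /\
              (exists i, v i = 1) /\ (forall i, 1 <= v i)).

Fixpoint path_prob (T : finType) (W : T -> T -> R) (prev : T) (s : seq T) : R :=
  match s with
  | [::] => 1
  | y :: s' => W y prev * path_prob W y s'
  end.

Definition markov_prob (T : finType) (P1 : T -> R) (W : T -> T -> R) (s : seq T) : R :=
  match s with
  | [::] => 1
  | x :: s' => P1 x * path_prob W x s'
  end.

Section Channel.
Variables (M : finType) (X : finZmodType) (Z : finType).

(* W_{c,Z}(z|z') := sum_x W_c(x,z|0,z') (independent of x' under Assumption 1) *)
Definition WcZ (Wc : X * Z -> X * Z -> R) (z z' : Z) : R :=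
  fsum (fun x : X => Wc (x, z) (GRing.zero, z')).

Definition assumption1 (Wc : X * Z -> X * Z -> R) : Prop :=
  forall (z : Z) (x1 x2 : X) (z' : Z),
    fsum (fun x : X => Wc (x, z) (x1, z')) = fsum (fun x : X => Wc (x, z) (x2, z')).

Definition PZ1 (PXZ1 : X * Z -> R) (z : Z) : R := fsum (fun x : X => PXZ1 (x, z)).

Definition noise (n : nat) (y : n.-tuple (X * Z)) (xt : n.-tuple X) : n.-tuple (X * Z) :=
  [tuple ((GRing.add (tnth y i).1 (GRing.opp (tnth xt i))), (tnth y i).2) | i < n].

Definition code_error (k n : nat) (PM1 : M -> R) (Ws : M -> M -> R)
  (PXZ1 : X * Z -> R) (Wc : X * Z -> X * Z -> R)
  (e : k.-tuple M -> n.-tuple X) (d : n.-tuple (X * Z) -> k.-tuple M) : R :=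
  fsum (fun m : k.-tuple M =>
    markov_prob PM1 Ws (tval m) *
    fsum (fun y : n.-tuple (X * Z) =>
      if d y == m then 0 else markov_prob PXZ1 Wc (tval (noise y (e m))))).

Definition is_inf (E : R -> Prop) (p : R) : Prop :=
  (forall r, E r -> p <= r) /\ (forall q, (forall r, E r -> q <= r) -> q <= p).

Definition Pj (k n : nat) (PM1 : M -> R) (Ws : M -> M -> R)
  (PXZ1 : X * Z -> R) (Wc : X * Z -> X * Z -> R) : R :=
  epsilon (inhabits 0)
    (is_inf (fun r => exists (e : k.-tuple M -> n.-tuple X)
                              (d : n.-tuple (X * Z) -> k.-tuple M),
                         r = code_error PM1 Ws PXZ1 Wc e d)).

Definition As (Ws : M -> M -> R) (th : R) : M -> M -> R :=
  fun m m' => rpow (Ws m m') (1 - th).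

Definition Ac (Wc : X * Z -> X * Z -> R) (th : R) : X * Z -> X * Z -> R :=
  fun a a' => rpow (Wc a a') (1 - th) * rpow (WcZ Wc a.2 a'.2) th.

(* theta H^{W_s}_{1-theta}(M) and theta H^{W_c,down}_{1-theta}(X|Z) *)
Definition thetaHs (Ws : M -> M -> R) (th : R) : R := ln (pf_eig (As Ws th)).
Definition thetaHc (Wc : X * Z -> X * Z -> R) (th : R) : R := ln (pf_eig (Ac Wc th)).

Definition U (Ws : M -> M -> R) (Wc : X * Z -> X * Z -> R) (r th : R) : R :=
  r * thetaHs Ws th + thetaHc Wc th.

Definition delta_s (PM1 : M -> R) (Ws : M -> M -> R) (th : R) : R :=
  ln (fsum (fun m => pf_vec (As Ws th) m * rpow (PM1 m) (1 - th))).

Definition delta_c (PXZ1 : X * Z -> R) (Wc : X * Z -> X * Z -> R) (th : R) : R :=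
  ln (fsum (fun a => pf_vec (Ac Wc th) a *
                     (rpow (PXZ1 a) (1 - th) * rpow (PZ1 PXZ1 a.2) th))).

End Channel.

From HB Require Import structures.
From mathcomp Require Import all_boot.
From mathcomp Require Import ssralg finalg.
From Stdlib Require Import Reals ClassicalEpsilon Lra Psatz.
From mathcomp Require Import all_order all_algebra.
From mathcomp Require Import Rstruct Rstruct_topology classical_sets boolp functions.
From mathcomp Require Import topology normedtype derive matrix_normedtype.
From mathcomp Require Import ring.
Import GRing.Theory Num.Theory Order.TTheory.
Set Implicit Arguments. Unset Strict Implicit. Unset Printing Implicit Defensive.

(* Gallager's random-coding argument.  For a uniformly random encoder and the MAP
   decoder, the error event of a (message, noise) pair is controlled by the union
   bound over competing messages, and the interpolation p min(1, q/p) <= p^(1-s) q^s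
   turns it into a product, where q is the averaged competitor mass: the difference
   of the codewords of two distinct messages is uniform over X^n.  Summing over
   messages and noise sequences leaves path sums of the tilted weights W_s^(1-s) and
   W_c^(1-s) W_cZ^s (Assumption 1 lets the X-components of the noise be summed out,
   leaving the Z-chain W_cZ).  These factor along the path, so pairing them with the
   Perron-Frobenius left eigenvector v >= 1 bounds them by lambda^length times
   <v, initial weight>.  The Perron-Frobenius pair itself is obtained by maximising
   the Collatz-Wielandt value over a compact set. *)

Section FiniteSums.
Local Open Scope ring_scope.
Variable T : finType.
Implicit Type F : T -> R.

Lemma exists_argmax F : T -> exists m, forall x, F x <= F m.
Proof.
by move=> x0; case: (@arg_maxP _ R T x0 xpredT F isT) => m _ Fm; exists m => x; exact: Fm.
Qed.

Lemma ler_sum_term F i0 : (forall i, 0 <= F i) -> F i0 <= \sum_i F i.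
Proof. by move=> F0; rewrite (bigD1 i0) //= lerDl sumr_ge0. Qed.

Lemma sum_gt0_exists F : 0 < \sum_i F i -> exists i, 0 < F i.
Proof.
move=> S0; case: (boolP [exists i, 0 < F i]) => [/existsP // | /existsPn Fle].
suff: \sum_i F i <= 0 by rewrite leNgt S0.
by apply: sumr_le0 => i _; rewrite leNgt; exact: Fle.
Qed.

Lemma sum_mul_gt0 (v w : T -> R) :
  (forall i, 0 < v i) -> (forall i, 0 <= w i) -> (exists i, 0 < w i) -> 0 < \sum_i v i * w i.
Proof.
move=> v_gt0 w_ge0 [i wi]; apply: lt_le_trans (ler_sum_term i _); first exact: mulr_gt0.
by move=> j; apply: mulr_ge0; [exact: ltW | exact: w_ge0].
Qed.

Lemma sum_mul_delta_l F i : \sum_l (i == l)%:R * F l = F i.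
Proof.
rewrite (bigD1 i) //= eqxx mul1r big1 ?addr0 // => l.
by rewrite eq_sym => /negbTE ->; rewrite mul0r.
Qed.

Lemma sum_mul_delta_r F j : \sum_l F l * (l == j)%:R = F j.
Proof. by rewrite (bigD1 j) //= eqxx mulr1 big1 ?addr0 // => l /negbTE ->; rewrite mulr0. Qed.

End FiniteSums.

Section FunctionMatrices.
Local Open Scope ring_scope.
Variable T : finType.
Implicit Types (A B C W : T -> T -> R) (y : T -> R).

Definition rvmul y A : T -> R := fun j => \sum_i y i * A i j.
Definition mxmul A B : T -> T -> R := fun i => rvmul (A i) B.
Definition mxid : T -> T -> R := fun i j => (i == j)%:R.
Definition addmx1 A : T -> T -> R := fun i j => mxid i j + A i j.

Lemma rvmulA y A B j : rvmul y (mxmul A B) j = rvmul (rvmul y A) B j.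
Proof.
rewrite /mxmul /rvmul; under eq_bigr do rewrite mulr_sumr.
rewrite exchange_big /=; apply: eq_bigr => l _; rewrite mulr_suml.
by apply: eq_bigr => i _; rewrite mulrA.
Qed.

Lemma mxmulA A B C i j : mxmul A (mxmul B C) i j = mxmul (mxmul A B) C i j.
Proof. exact: rvmulA. Qed.

Lemma eq_rvmull y y' A j : (forall i, y i = y' i) -> rvmul y A j = rvmul y' A j.
Proof. by move=> yy; apply: eq_bigr => i _; rewrite yy. Qed.

Lemma eq_rvmulr y A A' j : (forall i j, A i j = A' i j) -> rvmul y A j = rvmul y A' j.
Proof. by move=> AA; apply: eq_bigr => i _; rewrite AA. Qed.

Lemma eq_mxmull A A' B i j : (forall i j, A i j = A' i j) -> mxmul A B i j = mxmul A' B i j.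
Proof. by move=> AA; apply: eq_rvmull. Qed.

Lemma eq_mxmulr A B B' i j : (forall i j, B i j = B' i j) -> mxmul A B i j = mxmul A B' i j.
Proof. exact: eq_rvmulr. Qed.

Lemma rvmulZl y c A j : rvmul (fun i => y i * c) A j = rvmul y A j * c.
Proof. by rewrite /rvmul mulr_suml; apply: eq_bigr => i _; rewrite mulrAC. Qed.

Lemma rvmul_ge0 y A :
  (forall i, 0 <= y i) -> (forall i j, 0 <= A i j) -> forall j, 0 <= rvmul y A j.
Proof. by move=> y0 A0 j; apply: sumr_ge0 => i _; exact: mulr_ge0. Qed.

Lemma mxmul1l A i j : mxmul mxid A i j = A i j.
Proof. exact: sum_mul_delta_l. Qed.

Lemma mxmul1r A i j : mxmul A mxid i j = A i j.
Proof. exact: sum_mul_delta_r. Qed.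

Lemma addmx1_comm A i j : mxmul A (addmx1 A) i j = mxmul (addmx1 A) A i j.
Proof.
rewrite /mxmul /rvmul /addmx1.
under eq_bigr do rewrite mulrDr; under [RHS]eq_bigr do rewrite mulrDl.
by rewrite !big_split /= sum_mul_delta_r sum_mul_delta_l.
Qed.

Lemma tpow0 W i j : tpow W 0 i j = mxid i j.
Proof. by rewrite /= /mxid; case: eqP. Qed.

Lemma tpowS W t : tpow W t.+1 = mxmul W (tpow W t).
Proof. by []. Qed.

Lemma tpow_ge0 W : (forall i j, 0 <= W i j) -> forall t i j, 0 <= tpow W t i j.
Proof.
move=> W0; elim=> [|t IH] i j; first by rewrite tpow0 ler0n.
by rewrite tpowS; apply: rvmul_ge0.
Qed.

Lemma tpow_gt0_of_support W V :
  (forall i j, 0 <= W i j) -> (forall i j, 0 <= V i j) ->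
  (forall i j, 0 < W i j -> 0 < V i j) ->
  forall t i j, 0 < tpow W t i j -> 0 < tpow V t i j.
Proof.
move=> W0 V0 WV; elim=> [|t IH] i j; first by rewrite !tpow0.
rewrite !tpowS => /sum_gt0_exists[l].
rewrite lt0r mulf_eq0 negb_or => /andP[/andP[Wl Tl] _].
apply: lt_le_trans (ler_sum_term l _); last first.
  by move=> l'; apply: mulr_ge0; [exact: V0 | exact: tpow_ge0].
by apply: mulr_gt0; [apply: WV | apply: IH]; rewrite lt0r ?Wl ?Tl ?W0 ?tpow_ge0.
Qed.

Lemma mxmul_tpow_comm A W : (forall i j, mxmul A W i j = mxmul W A i j) ->
  forall t i j, mxmul A (tpow W t) i j = mxmul (tpow W t) A i j.
Proof.
move=> AW; elim=> [|t IH] i j.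
  transitivity (A i j); [rewrite -(mxmul1r A) | rewrite -(mxmul1l A)];
    by apply: eq_bigr => l _; rewrite tpow0.
rewrite tpowS mxmulA (eq_mxmull _ _ _ AW) -mxmulA.
by rewrite (eq_mxmulr _ _ _ IH) mxmulA.
Qed.

Lemma tpow_le_tpow_addmx1 A : (forall i j, 0 <= A i j) ->
  forall (N t : nat) (i j : T), leq t N -> tpow A t i j <= tpow (addmx1 A) N i j.
Proof.
move=> A0 N; have IA0 i j : 0 <= addmx1 A i j by rewrite addr_ge0 ?ler0n.
elim: N => [|N IH] t i j; first by rewrite leqn0 => /eqP ->.
rewrite leq_eqVlt => /orP[/eqP-> | tN]; rewrite tpowS.
  apply: ler_sum => l _; apply: ler_pM; rewrite ?A0 ?tpow_ge0 ?IH //.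
  by rewrite /addmx1 lerDr ler0n.
apply: le_trans (IH t i j tN) _; rewrite [leRHS]/mxmul /rvmul /addmx1.
under eq_bigr do rewrite mulrDl.
by rewrite big_split /= sum_mul_delta_l lerDl rvmul_ge0 // => l; exact: tpow_ge0.
Qed.

Lemma positive_commutant A : (forall i j, 0 <= A i j) ->
  (forall i j, exists t, 0 < tpow A t i j) ->
  exists B, (forall i j, 0 < B i j) /\ (forall i j, mxmul A B i j = mxmul B A i j).
Proof.
move=> A0 Airr; pose t_ (p : T * T) := sval (cid (Airr p.1 p.2)).
exists (tpow (addmx1 A) (\max_p t_ p)); split; last first.
  by move=> i j; apply: mxmul_tpow_comm; exact: addmx1_comm.
move=> i j; apply: lt_le_trans (svalP (cid (Airr i j))) _.
exact: tpow_le_tpow_addmx1 (leq_bigmax (i, j)).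
Qed.

End FunctionMatrices.

Section PerronFrobenius.
Local Open Scope ring_scope.
Local Open Scope classical_set_scope.
Variables (T : finType) (A B : T -> T -> R).
Hypothesis A_ge0 : forall i j, 0 <= A i j.
Hypothesis B_gt0 : forall i j, 0 < B i j.
Hypothesis AB_comm : forall i j, mxmul A B i j = mxmul B A i j.

Lemma continuous_sum (U : topologicalType) (I : finType) (F : I -> U -> R^o) :
  (forall i, continuous (F i)) -> continuous (fun w => \sum_i F i w).
Proof.
move=> F_cont; rewrite -fct_sumE.
apply: (big_ind (fun f : U -> R^o => continuous f)) => [|f g cf cg w|i _].
- exact: cst_continuous.
- exact: (continuousD (cf w) (cg w)).
- exact: F_cont.
Qed.

Lemma rvmul_gt0 y : (forall i, 0 <= y i) -> 0 < \sum_i y i -> forall j, 0 < rvmul y B j.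
Proof.
move=> y_ge0 /sum_gt0_exists[i yi] j.
apply: lt_le_trans (ler_sum_term i _); first exact: mulr_gt0 yi (B_gt0 i j).
by move=> l; apply: mulr_ge0; rewrite ?y_ge0 ?ltW.
Qed.

Lemma rvmul_gap_comm y t j :
  rvmul (rvmul y B) A j - t * rvmul y B j = rvmul (fun l => rvmul y A l - t * y l) B j.
Proof.
rewrite -rvmulA (eq_rvmulr _ _ (fun i j => esym (AB_comm i j))) rvmulA.
by rewrite /rvmul mulr_sumr -sumrB; apply: eq_bigr => l _; rewrite mulrBl mulrA.
Qed.

Lemma cw_le_total y t : (forall l, 0 <= y l) -> 0 < \sum_j y j ->
  (forall j, t * y j <= rvmul y A j) -> t <= \sum_l \sum_j A l j.
Proof.
move=> y_ge0 S_gt0 cw_y; rewrite -(ler_pM2r S_gt0) mulr_sumr.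
apply: le_trans (ler_sum _ (fun j _ => cw_y j)) _.
rewrite exchange_big /= mulr_sumr; apply: ler_sum => l _.
rewrite -mulr_sumr mulrC ler_wpM2r // (ler_sum_term l) // => l'.
exact: sumr_ge0.
Qed.

(* Applying the positive matrix B, which commutes with A, turns a subinvariance
   t y <= y A that is strict somewhere into one that is strict everywhere. *)
Lemma cw_improve y t j0 : (forall i, 0 < y i) -> (forall j, t * y j <= rvmul y A j) ->
  t * y j0 < rvmul y A j0 ->
  exists2 r, t < r & forall j, r * rvmul y B j <= rvmul (rvmul y B) A j.
Proof.
move=> y_gt0 cw_y strict; set y' := rvmul y B.
have y'_gt0 j : 0 < y' j.
  apply: rvmul_gt0 => [i|]; first exact: ltW.
  exact: lt_le_trans (y_gt0 j0) (ler_sum_term j0 (fun i => ltW (y_gt0 i))).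
have gap_gt0 j : t * y' j < rvmul y' A j.
  rewrite -subr_gt0 rvmul_gap_comm; apply: lt_le_trans (ler_sum_term j0 _).
    by apply: mulr_gt0; rewrite ?subr_gt0.
  by move=> l; apply: mulr_ge0; [rewrite subr_ge0 | exact: ltW].
pose ratio j := rvmul y' A j / y' j.
have [j1 j1_min] := exists_argmax (fun j => - ratio j) j0.
exists (ratio j1); first by rewrite ltr_pdivlMr //; exact: gap_gt0.
by move=> j; rewrite -ler_pdivlMr // -lerN2; exact: j1_min.
Qed.

(* The pair (t, x) is stored as a row vector so that the extreme value theorem
   for row vectors applies. *)
Local Notation vec := 'rV[R]_(#|T|).+1.

Definition vx (w : vec) (i : T) : R := w ord0 (lift ord_max (enum_rank i)).
Definition vt (w : vec) : R := w ord0 ord_max.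
Definition vpack (t : R) (x : T -> R) : vec :=
  \row_k match unlift ord_max k with None => t | Some k' => x (enum_val k') end.

Lemma vx_vpack t x i : vx (vpack t x) i = x i.
Proof. by rewrite /vx /vpack mxE liftK enum_rankK. Qed.

Lemma vt_vpack t x : vt (vpack t x) = t.
Proof. by rewrite /vt /vpack mxE unlift_none. Qed.

Definition pf_bound : R := \sum_l \sum_j A l j + 1.

Definition cw_gap j (w : vec) : R := rvmul (rvmul (vx w) B) A j - vt w * rvmul (vx w) B j.

Definition cw_set : set vec :=
  [set w : vec | forall k, w ord0 k \in `[0, pf_bound]%R] `&`
  ([set w : vec | \sum_i vx w i = 1] `&` [set w : vec | forall j, 0 <= cw_gap j w]).

Lemma vx_continuous i : continuous (fun w => (vx w i : R^o)).
Proof. exact: coord_continuous. Qed.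

Lemma vt_continuous : continuous (fun w => (vt w : R^o)).
Proof. exact: coord_continuous. Qed.

Lemma rvmul_continuous (x : vec -> T -> R) (C : T -> T -> R) j :
  (forall i, continuous (fun w => (x w i : R^o))) -> continuous (fun w => (rvmul (x w) C j : R^o)).
Proof.
move=> x_cont; apply: continuous_sum => i w.
have C_cont : continuous (fun _ : vec => (C i j : R^o)) by exact: cst_continuous.
have xC_cont := continuousM (x_cont i w) (C_cont w); exact: xC_cont.
Qed.

Lemma cw_gap_continuous j : continuous (cw_gap j).
Proof.
have xB_cont j := @rvmul_continuous vx B j vx_continuous.
move=> w; have tB_cont := continuousM (@vt_continuous w) (xB_cont j w).
have xBA_cont := @rvmul_continuous (fun w => rvmul (vx w) B) A j xB_cont w.
have gap_cont := continuousB xBA_cont tB_cont; exact: gap_cont.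
Qed.

Lemma cw_set_compact : compact cw_set.
Proof.
apply: compact_closedI; last apply: closedI.
- have box_compact := rV_compact (fun _ : 'I_(#|T|).+1 => @segment_compact _ (0 : R) pf_bound).
  exact: box_compact.
- apply: (@preimage_closed _ _ (fun w => \sum_i vx w i) [set 1]); last exact: closed_eq.
  by move=> w _; apply: continuous_sum => i; exact: vx_continuous.
- have -> : [set w : vec | forall j, 0 <= cw_gap j w]
            = \bigcap_(j in setT) (cw_gap j @^-1` [set x | 0 <= x]).
    by apply/seteqP; split => [w w_in j _ | w w_in j]; exact: w_in.
  apply: closed_bigI => j _; apply: preimage_closed; last exact: closed_ge.
  by move=> w _; exact: cw_gap_continuous.
Qed.

Lemma vpack_in_cw_set t x :
  0 <= t <= pf_bound -> (forall i, 0 <= x i <= pf_bound) -> \sum_i x i = 1 ->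
  (forall j, t * rvmul x B j <= rvmul (rvmul x B) A j) -> cw_set (vpack t x).
Proof.
move=> t_in x_in x_sum cw_tx.
have vxE : vx (vpack t x) = x by apply: funext => i; exact: vx_vpack.
split; [|split].
- by move=> k; rewrite /vpack mxE in_itv /=; case: (unlift ord_max k).
- by rewrite /= vxE.
- by move=> j; rewrite /cw_gap vxE vt_vpack subr_ge0.
Qed.

Lemma one_le_pf_bound : 1 <= pf_bound.
Proof. by rewrite lerDr; apply: sumr_ge0 => l _; apply: sumr_ge0. Qed.

Lemma cw_set_max_eigen c : cw_set c -> (forall w, cw_set w -> vt w <= vt c) ->
  (forall j, 0 < rvmul (vx c) B j) /\
  (forall j, rvmul (rvmul (vx c) B) A j = vt c * rvmul (vx c) B j).
Proof.
case=> c_box [c_sum c_gap] c_max.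
have x_ge0 i : 0 <= vx c i by case/andP: (c_box (lift ord_max (enum_rank i))).
have t_ge0 : 0 <= vt c by case/andP: (c_box ord_max).
set y := rvmul (vx c) B.
have y_gt0 j : 0 < y j by apply: rvmul_gt0; rewrite // c_sum ltr01.
have cw_y j : vt c * y j <= rvmul y A j by rewrite -subr_ge0; exact: c_gap.
split=> // j0; apply/eqP; rewrite eq_le cw_y andbT leNgt; apply/negP => strict.
have [r t_lt_r cw_r] := cw_improve y_gt0 cw_y strict.
set S := \sum_i y i.
have S_gt0 : 0 < S by apply: lt_le_trans (y_gt0 j0) (ler_sum_term j0 _) => i; exact: ltW.
have yS_ge0 i : 0 <= y i / S by rewrite divr_ge0 ?ltW.
have r_le : r <= pf_bound.
  have y'_gt0 := rvmul_gt0 (fun i => ltW (y_gt0 i)) S_gt0.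
  apply: le_trans (cw_le_total (fun l => ltW (y'_gt0 l)) _ cw_r) _; last by rewrite lerDl.
  exact: lt_le_trans (y'_gt0 j0) (ler_sum_term j0 (fun l => ltW (y'_gt0 l))).
have : cw_set (vpack r (fun i => y i / S)).
  apply: vpack_in_cw_set => [|i||j].
  - by rewrite r_le andbT (le_trans t_ge0 (ltW t_lt_r)).
  - rewrite yS_ge0 (le_trans _ one_le_pf_bound) // ler_pdivrMr // mul1r.
    by apply: ler_sum_term => l; exact: ltW.
  - by rewrite -mulr_suml divff // gt_eqF.
  - rewrite rvmulZl (eq_rvmull _ _ (fun l => rvmulZl y _ B l)) rvmulZl mulrA.
    by rewrite ler_pM2r ?invr_gt0.
by move=> /c_max; rewrite vt_vpack => /(lt_le_trans t_lt_r); rewrite ltxx.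
Qed.

Lemma pf_pair_exists (i0 : T) :
  exists l v, (forall i, 0 < v i) /\ forall j, rvmul v A j = l * v j.
Proof.
have [c c_in c_max] : exists2 c, c \in cw_set & forall w, w \in cw_set -> vt w <= vt c.
  apply: EVT_max_rV cw_set_compact (continuous_subspaceT vt_continuous).
  exists (vpack 0 (fun i => (i == i0)%:R)); apply: vpack_in_cw_set => [|i||j].
  - by rewrite lexx (le_trans ler01 one_le_pf_bound).
  - by rewrite ler0n /=; case: (i == i0); rewrite ?(le_trans ler01) ?one_le_pf_bound.
  - rewrite (eq_bigr (fun i => (i0 == i)%:R * 1)) ?sum_mul_delta_l // => i _.
    by rewrite eq_sym mulr1.
  - rewrite mul0r; apply: (rvmul_ge0 _ A_ge0) => l.
    by apply: rvmul_ge0 => [k | k k']; rewrite ?ler0n ?ltW.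
move: c_in; rewrite in_setE => c_in.
have [y_gt0 y_eig] := cw_set_max_eigen c_in (fun w w_in => c_max w (mem_set w_in)).
by exists (vt c), (rvmul (vx c) B).
Qed.

End PerronFrobenius.

Lemma pf_pair_existsP (T : finType) (A : T -> T -> R) :
  (forall i j, (0 <= A i j)%R) -> (forall i j, exists t, (0 < tpow A t i j)%R) ->
  exists l v, is_pf_pair A l v.
Proof.
move=> A_ge0 A_irr; have [B [B_gt0 AB]] := positive_commutant A_ge0 A_irr.
case: (pickP (@predT T)) => [i0 _ | T0]; last first.
  by exists 0, (fun _ => 1); split=> i; move: (T0 i).
have [l [v [v_gt0 v_eig]]] := pf_pair_exists A_ge0 B_gt0 AB i0.
by exists l, v; split=> [i|]; [apply/RltP | exact: v_eig].
Qed.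

Section PerronFrobeniusData.
Local Open Scope ring_scope.
Variables (T : finType) (A : T -> T -> R).
Hypothesis A_ge0 : forall i j, 0 <= A i j.
Hypothesis A_irr : forall i j, exists t, 0 < tpow A t i j.

Lemma pf_vecP : T ->
  (forall i, 1 <= pf_vec A i) /\ forall j, rvmul (pf_vec A) A j = pf_eig A * pf_vec A j.
Proof.
move=> i0; have [l [v pair_v]] := pf_pair_existsP A_ge0 A_irr.
have [{pair_v}v [v_gt0 v_eig]] : exists v, is_pf_pair A (pf_eig A) v.
  exact: (epsilon_spec (inhabits 0) (fun l => exists v, is_pf_pair A l v)
                       (ex_intro _ l (ex_intro _ v pair_v))).
have [j0 j0_min] := exists_argmax (fun i => - v i) i0.
have vj0 : 0 < v j0 by apply/RltP.
pose u i := v i / v j0.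
have u_spec : is_pf_pair A (pf_eig A) u /\ (exists i, u i = R1) /\ (forall i, Rle R1 (u i)).
  split; [split|split].
  - by move=> i; apply/RltP; rewrite divr_gt0 //; apply/RltP.
  - move=> j; change (rvmul (fun i => v i / v j0) A j = pf_eig A * (v j / v j0)).
    by rewrite rvmulZl mulrA; congr (_ * _); exact: v_eig.
  - by exists j0; rewrite /u divff // gt_eqF.
  - by move=> i; apply/RleP; rewrite ler_pdivlMr // mul1r -lerN2.
have [[_ pf_eigen] [_ pf_ge1]] :
    is_pf_pair A (pf_eig A) (pf_vec A) /\ (exists i, pf_vec A i = R1) /\
    (forall i, Rle R1 (pf_vec A i)).
  exact: (epsilon_spec (inhabits (fun _ : T => 0))
    (fun v => is_pf_pair A (pf_eig A) v /\ (exists i, v i = R1) /\ (forall i, Rle R1 (v i)))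
    (ex_intro _ u u_spec)).
by split=> [i | j]; [apply/RleP; exact: pf_ge1 | exact: pf_eigen].
Qed.

Lemma pf_eig_gt0 : T -> (forall j, exists i, 0 < A i j) -> 0 < pf_eig A.
Proof.
move=> i0 A_col; have [pf_ge1 pf_eigen] := pf_vecP i0.
have pf_gt0 i : 0 < pf_vec A i by exact: lt_le_trans ltr01 (pf_ge1 i).
have [i Ai] := A_col i0.
rewrite -(pmulr_lgt0 _ (pf_gt0 i0)) -pf_eigen.
apply: lt_le_trans (ler_sum_term i _); first exact: mulr_gt0 (pf_gt0 i) Ai.
by move=> k; apply: mulr_ge0; [exact: ltW | exact: A_ge0].
Qed.

End PerronFrobeniusData.

Section RealPowers.
Local Open Scope R_scope.

Lemma rpow0 t : rpow 0 t = 0.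
Proof. by rewrite /rpow; case: (Req_dec_T 0 0) => // neq; exfalso; apply: neq. Qed.

Lemma rpowE a t : 0 < a -> rpow a t = exp (t * ln a).
Proof.
move=> a_gt0; rewrite /rpow; case: (Req_dec_T a 0) => // a0.
by rewrite a0 in a_gt0; case: (Rlt_irrefl 0).
Qed.

Lemma rpow1 t : rpow 1 t = 1.
Proof. by rewrite rpowE ?ln_1 ?Rmult_0_r ?exp_0 //; lra. Qed.

Lemma rpowM a b t : (0 <= a)%R -> (0 <= b)%R -> rpow (a * b) t = rpow a t * rpow b t.
Proof.
move=> a_ge0 b_ge0; have {}a_ge0 : 0 <= a by exact/RleP.
have {}b_ge0 : 0 <= b by exact/RleP.
have [->|a_neq0] := Req_dec a 0; first by rewrite Rmult_0_l !rpow0 Rmult_0_l.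
have [->|b_neq0] := Req_dec b 0; first by rewrite Rmult_0_r !rpow0 Rmult_0_r.
have a_gt0 : 0 < a by lra.
have b_gt0 : 0 < b by lra.
rewrite !rpowE ?ln_mult // ?Rmult_plus_distr_l ?exp_plus //; nra.
Qed.

Lemma exp_le_exp x y : x <= y -> exp x <= exp y.
Proof. by case=> [lt|->]; [left; exact: exp_increasing | right]. Qed.

Lemma ln_le_ln x y : 0 < x -> x <= y -> ln x <= ln y.
Proof. by move=> x_gt0; case=> [lt|->]; [left; exact: ln_increasing | right]. Qed.

Lemma rpow_ge0 a t : (0 <= rpow a t)%R.
Proof.
apply/RleP; rewrite /rpow; case: (Req_dec_T a 0) => ?; [exact: Rle_refl | left; exact: exp_pos].
Qed.

Lemma rpow_gt0 a t : (0 < a)%R -> (0 < rpow a t)%R.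
Proof. by move=> /RltP a_gt0; apply/RltP; rewrite rpowE //; exact: exp_pos. Qed.

(* Gallager's interpolation min(1, b/p) <= (b/p)^s, multiplied by p. *)
Lemma mul_le_rpow_interp p x b s : 0 <= p -> 0 <= x <= 1 -> p * x <= b -> 0 < s < 1 ->
  p * x <= rpow p (1 - s) * rpow b s.
Proof.
move=> p_ge0 x_in px_le s_in.
have [->|p_neq0] := Req_dec p 0.
  by rewrite Rmult_0_l; apply: Rmult_le_pos; apply/RleP; exact: rpow_ge0.
have [->|x_neq0] := Req_dec x 0.
  by rewrite Rmult_0_r; apply: Rmult_le_pos; apply/RleP; exact: rpow_ge0.
have p_gt0 : 0 < p by lra.
have x_gt0 : 0 < x by lra.
have px_gt0 : 0 < p * x by nra.
rewrite !rpowE -?exp_plus; try lra.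
rewrite -{1}(exp_ln (p * x) px_gt0) ln_mult //.
have ln_le_b : ln p + ln x <= ln b by rewrite -ln_mult //; exact: ln_le_ln.
have ln_x_le0 : ln x <= 0 by rewrite -ln_1; apply: ln_le_ln; lra.
apply: exp_le_exp; nra.
Qed.

End RealPowers.

Section MarkovPaths.
Local Open Scope ring_scope.
Variable T : finType.

Lemma sum_tupleS n (F : n.+1.-tuple T -> R) :
  \sum_(t : n.+1.-tuple T) F t = \sum_(x : T) \sum_(t : n.-tuple T) F [tuple of x :: t].
Proof.
rewrite pair_big /= (reindex (fun p : T * n.-tuple T => [tuple of p.1 :: p.2])) /=.
  by apply: eq_bigr => -[x t] _.
exists (fun t : n.+1.-tuple T => (thead t, [tuple of behead t])).
  by move=> [x t] _ /=; congr pair; apply: val_inj.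
by move=> t _; apply: val_inj => /=; rewrite [in RHS](tuple_eta t).
Qed.

Lemma sum_tuple0 (F : 0.-tuple T -> R) : \sum_(t : 0.-tuple T) F t = F [tuple].
Proof. by rewrite (big_pred1 [tuple]) // => t; apply/esym/eqP; exact: tuple0. Qed.

Lemma path_prob_ge0 (W : T -> T -> R) :
  (forall i j, 0 <= W i j) -> forall s prev, 0 <= path_prob W prev s.
Proof. by move=> W_ge0; elim=> [|y s IH] prev /=; rewrite ?ler01 ?mulr_ge0. Qed.

Lemma markov_prob_ge0 (P1 : T -> R) (W : T -> T -> R) :
  (forall i, 0 <= P1 i) -> (forall i j, 0 <= W i j) -> forall s, 0 <= markov_prob P1 W s.
Proof. by move=> P1_ge0 W_ge0 [|x s] /=; rewrite ?ler01 ?mulr_ge0 ?path_prob_ge0. Qed.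

Lemma sum_path_prob (W : T -> T -> R) :
  (forall i, \sum_j W j i = 1) -> forall n prev, \sum_(t : n.-tuple T) path_prob W prev t = 1.
Proof.
move=> W_sum; elim=> [|n IH] prev; first by rewrite sum_tuple0.
rewrite sum_tupleS -(W_sum prev); apply: eq_bigr => x _.
by rewrite /= -mulr_sumr IH mulr1.
Qed.

Lemma sum_markov_prob (P1 : T -> R) (W : T -> T -> R) :
  \sum_i P1 i = 1 -> (forall i, \sum_j W j i = 1) ->
  forall n, \sum_(t : n.+1.-tuple T) markov_prob P1 W t = 1.
Proof.
move=> P1_sum W_sum n; rewrite sum_tupleS -P1_sum; apply: eq_bigr => x _.
by rewrite /= -mulr_sumr sum_path_prob // mulr1.
Qed.

Lemma sum_path_weight_le (A : T -> T -> R) (l : R) (v : T -> R) (h : T -> seq T -> R) :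
  (forall i j, 0 <= A i j) -> (forall i, 1 <= v i) -> (forall j, rvmul v A j = l * v j) ->
  (forall prev, h prev [::] = 1) -> (forall prev y s, h prev (y :: s) = A y prev * h y s) ->
  forall n prev, \sum_(t : n.-tuple T) h prev t <= l ^+ n * v prev.
Proof.
move=> A_ge0 v_ge1 v_eig h_nil h_cons; elim=> [|n IH] prev.
  by rewrite sum_tuple0 /= h_nil expr0 mul1r.
rewrite sum_tupleS.
under eq_bigr => x _ do under eq_bigr => t _ do rewrite /= h_cons.
under eq_bigr => x _ do rewrite -mulr_sumr.
apply: le_trans (ler_sum _ (fun x _ => ler_wpM2l (A_ge0 x prev) (IH x))) _.
rewrite exprSr -mulrA -v_eig mulr_sumr.
by under eq_bigr => x _ do rewrite mulrCA (mulrC (A x prev)).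
Qed.

End MarkovPaths.

Section AdditiveNoise.
Local Open Scope ring_scope.
Variables (X : finZmodType) (Z : finType).

Definition channel_output n (w : n.-tuple (X * Z)) (a : n.-tuple X) : n.-tuple (X * Z) :=
  [tuple ((tnth w i).1 + tnth a i, (tnth w i).2) | i < n].
Definition tadd n (a b : n.-tuple X) : n.-tuple X := [tuple tnth a i + tnth b i | i < n].
Definition tsub n (a b : n.-tuple X) : n.-tuple X := [tuple tnth a i - tnth b i | i < n].

Lemma noise_output n (w : n.-tuple (X * Z)) a : noise (channel_output w a) a = w.
Proof.
apply: eq_from_tnth => i; rewrite /noise /channel_output !tnth_mktuple /= addrK.
by case: (tnth w i).
Qed.

Lemma output_noise n (y : n.-tuple (X * Z)) a : channel_output (noise y a) a = y.
Proof.
apply: eq_from_tnth => i; rewrite /noise /channel_output !tnth_mktuple /= addrNK.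
by case: (tnth y i).
Qed.

Lemma noise_output_tsub n (w : n.-tuple (X * Z)) a b :
  noise (channel_output w a) b = channel_output w (tsub a b).
Proof.
by apply: eq_from_tnth => i; rewrite /noise /channel_output /tsub !tnth_mktuple /= addrA.
Qed.

Lemma channel_output_cons n (w : n.-tuple (X * Z)) (t : n.-tuple X) b x :
  channel_output [tuple of b :: w] [tuple of x :: t]
  = [tuple of (b.1 + x, b.2) :: channel_output w t].
Proof.
apply: eq_from_tnth => i; case: (unliftP ord0 i) => [j ->|->].
  by rewrite tnthS /channel_output !tnth_mktuple !tnthS.
by rewrite tnth0 /channel_output !tnth_mktuple !tnth0.
Qed.

Lemma tsub_tadd n (a b u : n.-tuple X) : tsub a (tadd b u) = tsub (tsub a b) u.
Proof. by apply: eq_from_tnth => i; rewrite /tsub /tadd !tnth_mktuple opprD addrA. Qed.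

Lemma tsubK n (c u : n.-tuple X) : tsub c (tsub c u) = u.
Proof. by apply: eq_from_tnth => i; rewrite /tsub !tnth_mktuple opprB addrC subrK. Qed.

Lemma tsub_inj n (c : n.-tuple X) : injective (tsub c).
Proof. exact: can_inj (tsubK c). Qed.

Lemma tadd_injl n (u : n.-tuple X) : injective (fun a => tadd a u).
Proof.
move=> a b /(congr1 (fun t => tnth t)) ab; apply: eq_from_tnth => i.
by have := congr1 (fun f => f i) ab; rewrite /tadd !tnth_mktuple => /addIr.
Qed.

Lemma sum_path_prob_output (Wc : X * Z -> X * Z -> R) : assumption1 Wc ->
  forall n (a : X * Z) (w : n.-tuple (X * Z)),
  \sum_(t : n.-tuple X) path_prob Wc a (channel_output w t)
  = path_prob (WcZ Wc) a.2 [seq p.2 | p <- w].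
Proof.
move=> A1; elim=> [|n IH] a w; first by rewrite sum_tuple0 (tuple0 (channel_output _ _)) (tuple0 w).
case/tupleP: w => b w; rewrite sum_tupleS.
under eq_bigr => x _ do under eq_bigr => t _ do rewrite channel_output_cons /=.
under eq_bigr => x _ do rewrite -mulr_sumr IH.
rewrite /= -mulr_suml; congr (_ * _).
case: a => a1 a2; rewrite /WcZ (A1 b.2 0 a1 a2).
by rewrite [RHS](reindex_inj (addrI b.1)).
Qed.

Lemma sum_markov_prob_output (PXZ1 : X * Z -> R) (Wc : X * Z -> X * Z -> R) : assumption1 Wc ->
  forall n (w : n.+1.-tuple (X * Z)),
  \sum_(t : n.+1.-tuple X) markov_prob PXZ1 Wc (channel_output w t)
    = markov_prob (PZ1 PXZ1) (WcZ Wc) [seq p.2 | p <- w].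
Proof.
move=> A1 n; case/tupleP=> b w; rewrite sum_tupleS.
under eq_bigr => x _ do under eq_bigr => t _ do rewrite channel_output_cons /=.
under eq_bigr => x _ do rewrite -mulr_sumr sum_path_prob_output //.
by rewrite /= -mulr_suml; congr (_ * _); rewrite [RHS](reindex_inj (addrI b.1)).
Qed.

Lemma sum_ffun_tsub (K : finType) n (G : n.-tuple X -> R) (a b : K) : a != b ->
  (\sum_(e : {ffun K -> n.-tuple X}) G (tsub (e a) (e b))) * #|{: n.-tuple X}|%:R
  = #|{: {ffun K -> n.-tuple X}}|%:R * \sum_(t : n.-tuple X) G t.
Proof.
move=> ab; set S := \sum_(e : {ffun K -> n.-tuple X}) _.
have shift u : S = \sum_(e : {ffun K -> n.-tuple X}) G (tsub (tsub (e a) (e b)) u).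
  pose shift_b (e : {ffun K -> n.-tuple X}) := [ffun k => if k == b then tadd (e k) u else e k].
  have shift_b_inj : injective shift_b.
    move=> e1 e2 /ffunP e12; apply/ffunP => k; have := e12 k; rewrite !ffunE.
    by case: (k == b) => // /tadd_injl.
  rewrite /S (reindex_inj shift_b_inj) /=; apply: eq_bigr => e _.
  by rewrite !ffunE eqxx (negbTE ab) tsub_tadd.
rewrite mulr_natr -sumr_const; under eq_bigr => u _ do rewrite (shift u).
rewrite exchange_big /= mulr_natl -sumr_const; apply: eq_bigr => e _.
by rewrite [RHS](reindex_inj (tsub_inj (c := tsub (e a) (e b)))).
Qed.

End AdditiveNoise.

Section RandomCoding.
Local Open Scope ring_scope.
Variables (M : finType) (X : finZmodType) (Z : finType).
Variables (PM1 : M -> R) (Ws : M -> M -> R) (PXZ1 : X * Z -> R) (Wc : X * Z -> X * Z -> R).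
Hypothesis PM1_ge0 : forall m, 0 <= PM1 m.
Hypothesis Ws_ge0 : forall i j, 0 <= Ws i j.
Hypothesis PXZ1_ge0 : forall a, 0 <= PXZ1 a.
Hypothesis Wc_ge0 : forall i j, 0 <= Wc i j.
Hypothesis PM1_sum : \sum_m PM1 m = 1.
Hypothesis Ws_sum : forall i, \sum_j Ws j i = 1.
Variables (k n : nat) (m0 : M).

Local Notation message := (k.+1.-tuple M).
Local Notation codeword := (n.+1.-tuple X).
Local Notation output := (n.+1.-tuple (X * Z)).
Local Notation encoder := {ffun message -> codeword}.

Definition msg_prob (m : message) : R := markov_prob PM1 Ws m.
Definition noise_prob (w : output) : R := markov_prob PXZ1 Wc w.
Definition output_weight (w : output) : R := \sum_(t : codeword) noise_prob (channel_output w t).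
Definition joint_prob (e : encoder) (y : output) (m : message) : R :=
  msg_prob m * noise_prob (noise y (e m)).

Definition map_decoder (e : encoder) (y : output) : message :=
  epsilon (inhabits [tuple m0 | _ < k.+1])
    (fun m => forall m', joint_prob e y m' <= joint_prob e y m).

Lemma msg_prob_ge0 m : 0 <= msg_prob m.
Proof. exact: markov_prob_ge0. Qed.

Lemma noise_prob_ge0 w : 0 <= noise_prob w.
Proof. exact: markov_prob_ge0. Qed.

Lemma output_weight_ge0 w : 0 <= output_weight w.
Proof. by apply: sumr_ge0 => t _; exact: noise_prob_ge0. Qed.

Lemma card_codeword_gt0 : 0 < #|{: codeword}|%:R :> R.
Proof. by rewrite ltr0n; apply/card_gt0P; exists [tuple 0 | _ < n.+1]. Qed.

Lemma card_encoder_gt0 : 0 < #|{: encoder}|%:R :> R.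
Proof. by rewrite ltr0n; apply/card_gt0P; exists [ffun _ => [tuple 0 | _ < n.+1]]. Qed.

Lemma map_decoder_max e y m' : joint_prob e y m' <= joint_prob e y (map_decoder e y).
Proof.
have [m m_max] := exists_argmax (joint_prob e y) [tuple m0 | _ < k.+1].
exact: (epsilon_spec (inhabits [tuple m0 | _ < k.+1])
          (fun m => forall m', joint_prob e y m' <= joint_prob e y m) (ex_intro _ m m_max)).
Qed.

Lemma map_error_le_sum e m w :
  msg_prob m * noise_prob w * (map_decoder e (channel_output w (e m)) != m)%:R
  <= \sum_(m' | m' != m) msg_prob m' * noise_prob (channel_output w (tsub (e m) (e m'))).
Proof.
set y := channel_output w (e m); set m1 := map_decoder e y.
case: eqP => [_|/eqP err]; rewrite ?mulr0 ?mulr1.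
  by apply: sumr_ge0 => m' _; rewrite mulr_ge0 ?msg_prob_ge0 ?noise_prob_ge0.
have := map_decoder_max e y m; rewrite /joint_prob /y noise_output noise_output_tsub -/y -/m1.
move/le_trans; apply; rewrite (bigD1 m1) //= lerDl; apply: sumr_ge0 => m' _.
by rewrite mulr_ge0 ?msg_prob_ge0 ?noise_prob_ge0.
Qed.

Definition error_fraction m w : R :=
  (\sum_(e : encoder) (map_decoder e (channel_output w (e m)) != m)%:R) / #|{: encoder}|%:R.

Lemma error_fraction_ge0 m w : 0 <= error_fraction m w.
Proof. by apply: divr_ge0; [apply: sumr_ge0 => e _ | exact: ltW card_encoder_gt0]. Qed.

Lemma error_fraction_le1 m w : error_fraction m w <= 1.
Proof.
rewrite ler_pdivrMr ?card_encoder_gt0 // mul1r -sumr_const.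
by apply: ler_sum => e _; rewrite lern1 leq_b1.
Qed.

(* Averaged over all encoders, the difference of the codewords of two distinct
   messages is uniformly distributed, so each term of the union bound becomes the
   output weight divided by the number of codewords. *)
Lemma joint_error_le_output_weight m w :
  msg_prob m * noise_prob w * error_fraction m w <= output_weight w / #|{: codeword}|%:R.
Proof.
have NE_gt0 := card_encoder_gt0; have NT_gt0 := card_codeword_gt0.
set q := output_weight w / #|{: codeword}|%:R * #|{: encoder}|%:R.
have avg m' : m' != m ->
    \sum_(e : encoder) noise_prob (channel_output w (tsub (e m) (e m'))) = q.
  move=> m'm; apply: (mulIf (lt0r_neq0 NT_gt0)).
  rewrite (sum_ffun_tsub (fun t => noise_prob (channel_output w t))) 1?eq_sym //.
  by rewrite mulrAC divfK ?lt0r_neq0 // mulrC.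
rewrite /error_fraction mulrA ler_pdivrMr // mulr_sumr.
apply: le_trans (ler_sum _ (fun e _ => map_error_le_sum e m w)) _.
rewrite exchange_big /= (eq_bigr (fun m' => msg_prob m' * q)); last first.
  by move=> m' m'm; rewrite -mulr_sumr avg.
rewrite -mulr_suml -[X in _ <= X]mul1r; apply: ler_wpM2r.
  by rewrite /q mulr_ge0 ?divr_ge0 ?output_weight_ge0 ?ltW.
rewrite -(sum_markov_prob PM1_sum Ws_sum k) [X in _ <= X](bigID (fun m' => m' != m)) /= lerDl.
by apply: sumr_ge0 => m' _; exact: msg_prob_ge0.
Qed.

Lemma joint_error_le_rpow m w s : 0 < s < 1 ->
  msg_prob m * noise_prob w * error_fraction m w
  <= rpow (msg_prob m * noise_prob w) (Rminus 1 s) * rpow (output_weight w / #|{: codeword}|%:R) s.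
Proof.
case/andP=> s_gt0 s_lt1; apply/RleP; apply: mul_le_rpow_interp.
- by apply/RleP; rewrite mulr_ge0 ?msg_prob_ge0 ?noise_prob_ge0.
- by split; apply/RleP; [exact: error_fraction_ge0 | exact: error_fraction_le1].
- by apply/RleP; exact: joint_error_le_output_weight.
- by split; apply/RltP.
Qed.

Lemma code_errorE (e : encoder) (d : output -> message) :
  code_error PM1 Ws PXZ1 Wc e d
  = \sum_m \sum_w msg_prob m * noise_prob w * (d (channel_output w (e m)) != m)%:R.
Proof.
apply: eq_bigr => m _; rewrite RmultE mulr_sumr.
rewrite (reindex (fun w => channel_output w (e m))); last first.
  by exists (fun y => noise y (e m)) => y _; [exact: noise_output | exact: output_noise].
apply: eq_bigr => w _; rewrite noise_output.
by case: (d (channel_output w (e m)) == m); rewrite ?mulr0 ?mulr1.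
Qed.

Definition msg_renyi_sum s : R := \sum_(m : message) rpow (msg_prob m) (Rminus 1 s).
Definition noise_renyi_sum s : R :=
  \sum_(w : output) rpow (noise_prob w) (Rminus 1 s) * rpow (output_weight w) s.

Lemma sum_code_error_le s : 0 < s < 1 ->
  \sum_(e : encoder) code_error PM1 Ws PXZ1 Wc e (map_decoder e)
  <= #|{: encoder}|%:R * (rpow (#|{: codeword}|%:R^-1) s * (msg_renyi_sum s * noise_renyi_sum s)).
Proof.
move=> s_in; have NE_gt0 := card_encoder_gt0; have NT_gt0 := card_codeword_gt0.
under eq_bigr do rewrite code_errorE.
rewrite exchange_big /= /msg_renyi_sum /noise_renyi_sum big_distrlr /= !mulr_sumr.
apply: ler_sum => m _; rewrite exchange_big /= !mulr_sumr; apply: ler_sum => w _.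
have -> : \sum_(e : encoder)
      msg_prob m * noise_prob w * (map_decoder e (channel_output w (e m)) != m)%:R
    = #|{: encoder}|%:R * (msg_prob m * noise_prob w * error_fraction m w).
  by rewrite /error_fraction -mulr_sumr mulrCA; congr (_ * _); rewrite mulrC divfK ?lt0r_neq0.
rewrite ler_pM2l //; apply: le_trans (joint_error_le_rpow m w s_in) _.
rewrite rpowM ?msg_prob_ge0 ?noise_prob_ge0 //.
rewrite rpowM ?output_weight_ge0 ?invr_ge0 ?(ltW NT_gt0) //.
by rewrite !RmultE le_eqVlt; apply/predU1P; left; ring.
Qed.

Lemma exists_good_code s : 0 < s < 1 -> exists e : encoder,
  code_error PM1 Ws PXZ1 Wc e (map_decoder e)
  <= rpow (#|{: codeword}|%:R^-1) s * (msg_renyi_sum s * noise_renyi_sum s).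
Proof.
move=> s_in; pose err (e : encoder) := code_error PM1 Ws PXZ1 Wc e (map_decoder e).
have [e_best e_best_min] := exists_argmax (fun e => - err e) [ffun _ => [tuple 0 | _ < n.+1]].
exists e_best; rewrite -(ler_pM2l card_encoder_gt0).
apply: le_trans (sum_code_error_le s_in).
rewrite mulr_natl -sumr_const; apply: ler_sum => e _.
by rewrite -lerN2; exact: e_best_min.
Qed.

End RandomCoding.

Section ExponentBounds.
Local Open Scope ring_scope.

Lemma WcZ_ge0 (X : finZmodType) (Z : finType) (Wc : X * Z -> X * Z -> R) :
  (forall i j, 0 <= Wc i j) -> forall z z', 0 <= WcZ Wc z z'.
Proof. by move=> Wc_ge0 z z'; apply: sumr_ge0 => x _. Qed.

Lemma WcZ_gt0 (X : finZmodType) (Z : finType) (Wc : X * Z -> X * Z -> R) :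
  (forall i j, 0 <= Wc i j) -> assumption1 Wc -> forall a b, 0 < Wc a b -> 0 < WcZ Wc a.2 b.2.
Proof.
move=> Wc_ge0 A1 [a1 a2] [b1 b2] Wab /=; rewrite /WcZ (A1 a2 0 b1 b2).
by apply: lt_le_trans Wab (ler_sum_term a1 _) => x.
Qed.

Lemma PZ1_ge0 (X : finZmodType) (Z : finType) (P : X * Z -> R) :
  (forall a, 0 <= P a) -> forall z, 0 <= PZ1 P z.
Proof. by move=> P_ge0 z; apply: sumr_ge0 => x _. Qed.

Lemma sum_rpow_markov_prob_le (M : finType) (PM1 : M -> R) (Ws : M -> M -> R) s k l v :
  (forall m, 0 <= PM1 m) -> (forall i j, 0 <= Ws i j) -> (forall i, 1 <= v i) ->
  (forall j, rvmul v (As Ws s) j = l * v j) ->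
  \sum_(m : k.+1.-tuple M) rpow (markov_prob PM1 Ws m) (Rminus 1 s)
    <= l ^+ k * \sum_m v m * rpow (PM1 m) (Rminus 1 s).
Proof.
move=> PM1_ge0 Ws_ge0 v_ge1 v_eig.
have paths_le := sum_path_weight_le (fun i j => rpow_ge0 _ _) v_ge1 v_eig
  (fun prev => rpow1 _) (fun prev y t => rpowM _ (Ws_ge0 _ _) (path_prob_ge0 Ws_ge0 t y)).
rewrite sum_tupleS mulr_sumr; apply: ler_sum => x _.
under eq_bigr => t _ do rewrite /= rpowM ?(PM1_ge0 x) ?(path_prob_ge0 Ws_ge0 _ _) //.
rewrite -mulr_sumr [X in _ <= X]mulrA [X in _ <= X]mulrC; apply: ler_wpM2l; first exact: rpow_ge0.
exact: paths_le.
Qed.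

Lemma sum_rpow_joint_le (X : finZmodType) (Z : finType) (PXZ1 : X * Z -> R)
    (Wc : X * Z -> X * Z -> R) s n l v :
  (forall a, 0 <= PXZ1 a) -> (forall i j, 0 <= Wc i j) -> assumption1 Wc -> (forall i, 1 <= v i) ->
  (forall j, rvmul v (Ac Wc s) j = l * v j) ->
  \sum_(w : n.+1.-tuple (X * Z)) rpow (markov_prob PXZ1 Wc w) (Rminus 1 s)
       * rpow (\sum_(t : n.+1.-tuple X) markov_prob PXZ1 Wc (channel_output w t)) s
    <= l ^+ n * \sum_a v a * (rpow (PXZ1 a) (Rminus 1 s) * rpow (PZ1 PXZ1 a.2) s).
Proof.
move=> PXZ1_ge0 Wc_ge0 A1 v_ge1 v_eig.
have WcZ_ge0' := WcZ_ge0 Wc_ge0.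
pose h (prev : X * Z) (t : seq (X * Z)) := rpow (path_prob Wc prev t) (Rminus 1 s)
   * rpow (path_prob (WcZ Wc) prev.2 [seq p.2 | p <- t]) s.
have h_cons prev y t : h prev (y :: t) = Ac Wc s y prev * h y t.
  rewrite /h /= !rpowM ?(Wc_ge0 _ _) ?(WcZ_ge0' _ _);
    rewrite ?(path_prob_ge0 Wc_ge0 _ _) ?(path_prob_ge0 WcZ_ge0' _ _) //.
  by rewrite /Ac !RmultE; ring.
have paths_le := sum_path_weight_le (fun i j => mulr_ge0 (rpow_ge0 _ _) (rpow_ge0 _ _)) v_ge1 v_eig
  (fun prev => etrans (congr2 _ (rpow1 _) (rpow1 _)) (mulr1 _)) h_cons.
under eq_bigr do rewrite sum_markov_prob_output //.
rewrite sum_tupleS mulr_sumr; apply: ler_sum => b _.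
have -> : \sum_(t : n.-tuple (X * Z)) rpow (markov_prob PXZ1 Wc [tuple of b :: t]) (Rminus 1 s) *
      rpow (markov_prob (PZ1 PXZ1) (WcZ Wc) [seq p.2 | p <- [tuple of b :: t]]) s
    = rpow (PXZ1 b) (Rminus 1 s) * rpow (PZ1 PXZ1 b.2) s * \sum_(t : n.-tuple (X * Z)) h b t.
  rewrite mulr_sumr; apply: eq_bigr => t _; rewrite /h /= !rpowM ?(PXZ1_ge0 _);
    rewrite ?(PZ1_ge0 PXZ1_ge0 _) ?(path_prob_ge0 Wc_ge0 _ _);
    rewrite ?(path_prob_ge0 WcZ_ge0' _ _) //.
  by rewrite !RmultE; ring.
rewrite [X in _ <= X]mulrA [X in _ <= X]mulrC.
apply: ler_wpM2l; first by rewrite mulr_ge0 ?rpow_ge0.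
exact: paths_le.
Qed.

End ExponentBounds.

Section Infimum.
Local Open Scope R_scope.

Lemma is_inf_exists (E : R -> Prop) b :
  (exists r, E r) -> (forall r, E r -> b <= r) -> exists p, is_inf E p.
Proof.
move=> [r Er] b_low.
have ub : bound (fun x => E (- x)) by exists (- b) => x /b_low; lra.
have ne : exists x, E (- x) by exists (- r); rewrite Ropp_involutive.
have [m [m_ub m_lub]] := completeness _ ub ne.
exists (- m); split=> [x Ex | q q_low].
- suff : - x <= m by lra.
  by apply: m_ub; rewrite Ropp_involutive.
- suff : m <= - q by lra.
  by apply: m_lub => x /q_low; lra.
Qed.

Lemma code_error_ge0 (M : finType) (X : finZmodType) (Z : finType) k n (PM1 : M -> R)
  (Ws : M -> M -> R) (PXZ1 : X * Z -> R) (Wc : X * Z -> X * Z -> R) e d :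
  distribution PM1 -> stochastic Ws -> distribution PXZ1 -> stochastic Wc ->
  0 <= @code_error M X Z k n PM1 Ws PXZ1 Wc e d.
Proof.
move=> [PM1_ge0 _] [Ws_ge0 _] [PXZ1_ge0 _] [Wc_ge0 _].
apply/RleP; apply: sumr_ge0 => m _; apply: mulr_ge0.
  by apply: markov_prob_ge0 => *; apply/RleP.
by apply: sumr_ge0 => y _; case: (d y == m) => //; apply: markov_prob_ge0 => *; apply/RleP.
Qed.

Lemma Pj_le_code_error (M : finType) (X : finZmodType) (Z : finType) k n (PM1 : M -> R)
  (Ws : M -> M -> R) (PXZ1 : X * Z -> R) (Wc : X * Z -> X * Z -> R) e d :
  distribution PM1 -> stochastic Ws -> distribution PXZ1 -> stochastic Wc ->
  Pj k n PM1 Ws PXZ1 Wc <= @code_error M X Z k n PM1 Ws PXZ1 Wc e d.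
Proof.
move=> hPM1 hWs hPXZ1 hWc.
pose E r := exists (e : k.-tuple M -> n.-tuple X) (d : n.-tuple (X * Z) -> k.-tuple M),
  r = code_error PM1 Ws PXZ1 Wc e d.
have [p inf_p] : exists p, is_inf E p.
  apply: (@is_inf_exists E 0); first by exists (code_error PM1 Ws PXZ1 Wc e d), e, d.
  by move=> r [e' [d' ->]]; exact: code_error_ge0.
have [low _] := epsilon_spec (inhabits 0) (is_inf E) (ex_intro _ p inf_p).
by apply: low; exists e, d.
Qed.

End Infimum.

Lemma distribution_gt0 (T : finType) (P : T -> R) : distribution P -> exists i, (0 < P i)%R.
Proof. by case=> _ P_sum; apply: sum_gt0_exists; rewrite (_ : (\sum_i P i = 1)%R) ?ltr01. Qed.

Lemma pf_data_of_support (T : finType) (W A : T -> T -> R) : T ->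
  stochastic W -> irreducible W -> (forall i j, (0 <= A i j)%R) ->
  (forall i j, (0 < W i j)%R -> (0 < A i j)%R) ->
  [/\ (0 < pf_eig A)%R, forall i, (1 <= pf_vec A i)%R
    & forall j, rvmul (pf_vec A) A j = (pf_eig A * pf_vec A j)%R].
Proof.
move=> i0 [W_ge0 W_sum] W_irr A_ge0 WA.
have W_ge0' i j : (0 <= W i j)%R by apply/RleP.
have A_irr i j : exists t, (0 < tpow A t i j)%R.
  have [t [_ Wt]] := W_irr j i; exists t.
  by apply: (tpow_gt0_of_support W_ge0' A_ge0 WA); apply/RltP.
have [v_ge1 v_eig] := pf_vecP A_ge0 A_irr i0.
split=> //; apply: pf_eig_gt0 A_ge0 A_irr i0 _ => j.
have [i Wij] : exists i, (0 < W i j)%R.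
  by apply: sum_gt0_exists; rewrite (_ : (\sum_i W i j = 1)%R) ?ltr01 //; exact: W_sum.
by exists i; exact: WA.
Qed.

Section GallagerBound.
Local Open Scope R_scope.
Variables (M : finType) (X : finZmodType) (Z : finType).
Variables (PM1 : M -> R) (Ws : M -> M -> R) (PXZ1 : X * Z -> R) (Wc : X * Z -> X * Z -> R).
Hypotheses (hWs : stochastic Ws) (hWs_irr : irreducible Ws) (hPM1 : distribution PM1).
Hypotheses (hWc : stochastic Wc) (hWc_irr : irreducible Wc) (hPXZ1 : distribution PXZ1).
Hypothesis A1 : assumption1 Wc.
Variable s : R.

Definition src_pf_weight : R := fsum (fun m => pf_vec (As Ws s) m * rpow (PM1 m) (1 - s)).
Definition ch_pf_weight : R :=
  fsum (fun a => pf_vec (Ac Wc s) a * (rpow (PXZ1 a) (1 - s) * rpow (PZ1 PXZ1 a.2) s)).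

Lemma src_pf_data : [/\ (0 < pf_eig (As Ws s))%R, forall i, (1 <= pf_vec (As Ws s) i)%R
  & forall j, rvmul (pf_vec (As Ws s)) (As Ws s) j = (pf_eig (As Ws s) * pf_vec (As Ws s) j)%R].
Proof.
have [m0 _] := distribution_gt0 hPM1.
apply: pf_data_of_support m0 hWs hWs_irr (fun i j => rpow_ge0 _ _) _ => i j.
exact: rpow_gt0.
Qed.

Let Wc_ge0 i j : (0 <= Wc i j)%R.
Proof. by apply/RleP; case: hWc. Qed.

Lemma ch_pf_data : [/\ (0 < pf_eig (Ac Wc s))%R, forall i, (1 <= pf_vec (Ac Wc s) i)%R
  & forall j, rvmul (pf_vec (Ac Wc s)) (Ac Wc s) j = (pf_eig (Ac Wc s) * pf_vec (Ac Wc s) j)%R].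
Proof.
have [a0 _] := distribution_gt0 hPXZ1.
apply: pf_data_of_support a0 hWc hWc_irr (fun i j => mulr_ge0 (rpow_ge0 _ _) (rpow_ge0 _ _)) _.
by move=> a b Wab; rewrite mulr_gt0 ?rpow_gt0 // WcZ_gt0 //; exact: Wc_ge0.
Qed.

Lemma src_pf_weight_gt0 : 0 < src_pf_weight.
Proof.
have [_ v_ge1 _] := src_pf_data; have [m0 Pm0] := distribution_gt0 hPM1.
apply/RltP; apply: sum_mul_gt0 => [i | i |]; first exact: lt_le_trans ltr01 (v_ge1 i).
  exact: rpow_ge0.
by exists m0; exact: rpow_gt0.
Qed.

Lemma ch_pf_weight_gt0 : 0 < ch_pf_weight.
Proof.
have [_ v_ge1 _] := ch_pf_data; have [[x0 z0] Pa0] := distribution_gt0 hPXZ1.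
have PZ_gt0 : (0 < PZ1 PXZ1 z0)%R.
  apply: lt_le_trans Pa0 (ler_sum_term x0 _) => x.
  by apply/RleP; case: hPXZ1.
apply/RltP; apply: sum_mul_gt0 => [i | i |]; first exact: lt_le_trans ltr01 (v_ge1 i).
  by rewrite mulr_ge0 ?rpow_ge0.
by exists (x0, z0); rewrite mulr_gt0 ?rpow_gt0.
Qed.

Lemma Pj_le_pf_product k n : 0 < s < 1 ->
  Pj k.+1 n.+1 PM1 Ws PXZ1 Wc
  <= rpow (/ INR #|X| ^ n.+1) s
     * ((pf_eig (As Ws s) ^ k * src_pf_weight) * (pf_eig (Ac Wc s) ^ n * ch_pf_weight)).
Proof.
move=> [s_gt0 s_lt1].
have s_in : (0 < s < 1)%R by apply/andP; split; apply/RltP.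
have [PM1_ge0 PM1_sum] := hPM1; have [Ws_ge0 Ws_sum] := hWs.
have PM1_ge0' m : (0 <= PM1 m)%R by apply/RleP.
have Ws_ge0' i j : (0 <= Ws i j)%R by apply/RleP.
have PXZ1_ge0' a : (0 <= PXZ1 a)%R by apply/RleP; case: hPXZ1.
have [m0 _] := distribution_gt0 hPM1.
have [e e_good] := exists_good_code PM1_ge0' Ws_ge0' PXZ1_ge0' Wc_ge0 PM1_sum Ws_sum k n m0 s_in.
apply: Rle_trans (Pj_le_code_error e _ hPM1 hWs hPXZ1 hWc) _; apply/RleP.
apply: le_trans e_good _.
have [_ vs_ge1 vs_eig] := src_pf_data; have [_ vc_ge1 vc_eig] := ch_pf_data.
rewrite card_tuple natrX -INRE -RpowE RinvE !RmultE !RpowE.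
apply: ler_wpM2l; first exact: rpow_ge0.
apply: ler_pM.
- by apply: sumr_ge0 => m _; exact: rpow_ge0.
- by apply: sumr_ge0 => w _; rewrite mulr_ge0 ?rpow_ge0.
- exact: sum_rpow_markov_prob_le PM1_ge0' Ws_ge0' vs_ge1 vs_eig.
- exact: sum_rpow_joint_le PXZ1_ge0' Wc_ge0 A1 vc_ge1 vc_eig.
Qed.

End GallagerBound.

Lemma gallager_exponentE (N k n : nat) (s ls lc ds dc : R) :
  (0 < N)%nat -> n <> 0%nat -> 0 < ls -> 0 < lc -> 0 < ds -> 0 < dc ->
  rpow (/ INR N ^ n.+1) s * ((ls ^ k * ds) * (lc ^ n * dc))
  = exp (- INR n.+1 * s * ln (INR N)
         + (INR n.+1 - 1) * ((INR k.+1 - 1) / (INR n.+1 - 1) * ln ls + ln lc) + ln ds + ln dc).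
Proof.
move=> N_gt0 n_neq0 ls_gt0 lc_gt0 ds_gt0 dc_gt0.
have N_pos : 0 < INR N by apply: lt_0_INR; apply/ssrnat.ltP.
have n_pos : INR n <> 0 by exact: not_0_INR.
have -> : (INR n.+1 - 1) * ((INR k.+1 - 1) / (INR n.+1 - 1) * ln ls + ln lc)
          = INR k * ln ls + INR n * ln lc.
  have [-> ->] : INR n.+1 - 1 = INR n /\ INR k.+1 - 1 = INR k by rewrite !S_INR; split; lra.
  rewrite Rmult_plus_distr_l -Rmult_assoc /Rdiv (Rmult_comm (INR k)) -Rmult_assoc.
  by rewrite Rinv_r // Rmult_1_l.
rewrite rpowE; last by apply: Rinv_0_lt_compat; apply: pow_lt.
rewrite ln_Rinv; last exact: pow_lt.
rewrite ln_pow //.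
rewrite !exp_plus !exp_ln // -[exp (INR k * ln ls)]/(Rpower ls (INR k)).
rewrite -[exp (INR n * ln lc)]/(Rpower lc (INR n)) !Rpower_pow //.
have -> : s * - (INR n.+1 * ln (INR N)) = - INR n.+1 * s * ln (INR N) by lra.
by rewrite !RmultE; ring.
Qed.

Theorem mainTheorem9 (M : finType) (X : finZmodType) (Z : finType)
  (PM1 : M -> R) (Ws : M -> M -> R)
  (PXZ1 : X * Z -> R) (Wc : X * Z -> X * Z -> R)
  (hWs : stochastic Ws) (hWs_irr : irreducible Ws) (hWs_ap : aperiodic Ws)
  (hPM1 : distribution PM1)
  (hWc : stochastic Wc) (hWc_irr : irreducible Wc) (hWc_ap : aperiodic Wc)
  (hPXZ1 : distribution PXZ1)
  (hA1 : assumption1 Wc)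
  (k n : nat) (hk : (2 <= k)%nat) (hn : (2 <= n)%nat) :
  forall s : R, 0 < s < 1 ->
    Pj k n PM1 Ws PXZ1 Wc <=
    exp (- INR n * s * ln (INR #|X|)
         + (INR n - 1) * U Ws Wc ((INR k - 1) / (INR n - 1)) s
         + delta_s PM1 Ws s + delta_c PXZ1 Wc s).
Proof.
move=> s s_in; case: k hk => [|k] // _; case: n hn => [|n] // hn.
have [ls_gt0 _ _] := src_pf_data hWs hWs_irr hPM1 s.
have [lc_gt0 _ _] := ch_pf_data hWc hWc_irr hPXZ1 hA1 s.
apply: Rle_trans (Pj_le_pf_product hWs hWs_irr hPM1 hWc hWc_irr hPXZ1 hA1 k n s_in) _.
right; apply: gallager_exponentE; try exact/RltP.
- by apply/card_gt0P; exists 0%R.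
- by case: n hn.
- exact: src_pf_weight_gt0.
- exact: ch_pf_weight_gt0.
Qed.
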